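(* Let $\Gamma$ be a simple, undirected, connected graph with $p\ge 2$ vertices and maximum degree $\Delta\ge 1$. Then $\gamma_{[3R]}(\Gamma)\le 3p-3\Delta+1$.
   Context: For a graph $\Gamma=(V,E)$ and $h:V\to\{0,1,2,3,4\}$, let $AN(v)=\{w\in N(v):h(w)\ge 1\}$, $AN[v]=AN(v)\cup\{v\}$ and $h(S)=\sum_{u\in S}h(u)$. $h$ is a triple Roman dominating function (3RDF) if every $v$ with $h(v)<3$ satisfies $h(AN[v])\ge|AN(v)|+3$. The triple Roman domination number $\gamma_{[3R]}(\Gamma)$ is the minimum weight $h(V)$ of a 3RDF of $\Gamma$. *)

From mathcomp Require Import all_boot all_order.
Set Implicit Arguments. Unset Strict Implicit. Unset Printing Implicit Defensive.

Definition simple_graph (T : finType) (e : rel T) : Prop :=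
  symmetric e /\ irreflexive e.

Definition connected_graph (T : finType) (e : rel T) : Prop :=
  forall x y : T, connect e x y.

Definition nbhd (T : finType) (e : rel T) (v : T) : {set T} := [set w | e v w].
Definition deg (T : finType) (e : rel T) (v : T) : nat := #|nbhd e v|.
Definition max_deg (T : finType) (e : rel T) : nat := \max_(v : T) deg e v.

Definition wfun (T : finType) := {ffun T -> 'I_5}.

Definition AN (T : finType) (e : rel T) (h : wfun T) (v : T) : {set T} :=
  [set w in nbhd e v | 1 <= h w].
Definition hsum (T : finType) (h : wfun T) (S : {set T}) : nat :=
  \sum_(u in S) (h u : nat).

Definition is3RDF (T : finType) (e : rel T) (h : wfun T) : bool :=
  [forall v, (h v < 3) ==> (#|AN e h v| + 3 <= hsum h (v |: AN e h v))].

Definition weight (T : finType) (h : wfun T) : nat := hsum h [set: T].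

(* gamma_[3R] = minimum weight of a 3RDF; the default value 4|V| is an upper
   bound attained by the constant-4 function (a 3RDF), so it does not alter
   the minimum. *)
Definition gamma3R (T : finType) (e : rel T) : nat :=
  \big[minn/4 * #|T|]_(h : wfun T | is3RDF e h) weight h.

From mathcomp Require Import all_boot all_order.
From mathcomp Require Import zify.

(* Put 4 on a vertex v of maximum degree, 0 on its neighbours and 3 on every
   other vertex.  A vertex of weight 0 has v as an active neighbour, so its
   closed active neighbourhood weighs at least 4 plus 1 for each further
   active neighbour, i.e. at least |AN| + 3.  The weight of this 3RDF is
   4 + 3 (p - 1 - deg v) = 3p - 3 Delta + 1. *)

Section TripleRomanStar.

Variables (T : finType) (e : rel T).

Lemma gamma3R_le_weight (h : wfun T) : is3RDF e h -> gamma3R e <= weight h.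
Proof.
by move=> h3; rewrite /gamma3R -minEnat -leEnat; exact: Order.TotalTheory.bigmin_le_cond.
Qed.

Lemma card_le_hsum (h : wfun T) (S : {set T}) :
  {in S, forall u, 0 < h u} -> #|S| <= hsum h S.
Proof. by move=> hS; rewrite -sum1_card; apply: leq_sum. Qed.

Variable v : T.

Definition star_wfun : wfun T :=
  [ffun u => inord (if u == v then 4 else if e v u then 0 else 3)].

Lemma star_wfunE u :
  (star_wfun u : nat) = if u == v then 4 else if e v u then 0 else 3.
Proof. by rewrite ffunE inordK //; case: (u == v); case: (e v u). Qed.

Lemma star_wfun_is3RDF : symmetric e -> is3RDF e star_wfun.
Proof.
move=> esym; apply/forallP => w; apply/implyP; rewrite star_wfunE.
case: eqP => [//|/eqP wv]; case: ifP => [evw _|//].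
set A := AN e star_wfun w.
have vA : v \in A by rewrite !inE esym evw star_wfunE eqxx.
have wA : w \notin A by rewrite !inE star_wfunE (negbTE wv) evw andbF.
have restA : #|A :\ v| <= hsum star_wfun (A :\ v).
  by apply: card_le_hsum => u; rewrite !inE => /and3P[].
rewrite /hsum big_setU1 //= (bigD1 v) //= !star_wfunE (negbTE wv) evw eqxx.
rewrite (cardsD1 v A) vA.
suff -> : \sum_(i in A | i != v) (star_wfun i : nat) = hsum star_wfun (A :\ v).
  by lia.
by apply: eq_bigl => u; rewrite in_setD1 andbC.
Qed.

Lemma weight_star_wfun :
  irreflexive e -> weight star_wfun = 3 * #|T| - 3 * deg e v + 1.
Proof.
move=> eirr.
have far_weight : weight star_wfun = 4 + 3 * #|[set~ v] :\: nbhd e v|.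
  rewrite /weight /hsum (bigD1 v) //= star_wfunE eqxx mulnC -sum_nat_const.
  congr (_ + _); rewrite big_mkcond [RHS]big_mkcond; apply: eq_bigr => u _.
  by rewrite !inE star_wfunE; case: (u == v); case: (e v u).
have nbhd_nov : [set~ v] :&: nbhd e v = nbhd e v.
  apply/setIidPr/subsetP => u; rewrite !inE.
  by apply: contraTN => /eqP ->; rewrite eirr.
have := cardsID (nbhd e v) [set~ v].
rewrite nbhd_nov cardsC1 far_weight /deg.
have : 0 < #|T| by apply/card_gt0P; exists v.
lia.
Qed.

End TripleRomanStar.

Theorem proposition7 (T : finType) (e : rel T) :
  simple_graph e -> connected_graph e ->
  2 <= #|T| -> 1 <= max_deg e ->
  gamma3R e <= 3 * #|T| - 3 * max_deg e + 1.
Proof.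
move=> [esym eirr] _ T2 _.
have [v ->] := eq_bigmax (deg e) (ltnW T2) : {v | max_deg e = deg e v}.
rewrite -(weight_star_wfun _ _ v eirr).
exact/gamma3R_le_weight/star_wfun_is3RDF.
Qed.
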